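(* Let $l\ge 2$ be an integer, $m=l^3-(l-2)^3$, and let $S_l$ be the set defined below. Then $S_l$ tiles $\mathbb{Z}^3$ by $(3m+6)\mathbb{Z}^3$, and whenever $S_l$ tiles $\mathbb{Z}^3$ by some $W$, $W$ is a translate of $(3m+6)\mathbb{Z}^3$.
   Context: Write $C_r=\{0,1,\dots,r-1\}^3$. Define $f:\{0,\dots,m+1\}^3\to\{1,\dots,m\}$ by: $f(x,y,z)=y$ if $0\le x\le m$, $1\le y\le m$, $z=0$; $f=x$ if $1\le x\le m$, $0\le y\le m$, $z=m+1$; $f=y$ if $x=0$, $1\le y\le m$, $1\le z\le m$; $f=x$ if $1\le x\le m$, $y=0$, $1\le z\le m$; $f=z$ if $1\le x\le m+1$, $1\le y\le m+1$, $1\le z\le m$; and $f=1$ at all remaining points. Let $Q_i=\{p\in\{0,\dots,m+1\}^3 : f(p)=i\}$. Set $Q_i'=3Q_i\oplus C_3$ for $2\le i\le m$, and $Q_1'=\big((3Q_1\oplus C_3)\cup\{(-1,1,1),(1,-1,1),(1,1,-1)\}\big)\setminus\{(3m+5,1,1),(1,3m+5,1),(1,1,3m+5)\}$ (here $cA=\{ca: a\in A\}$ and $A\oplus B=\{a+b: a\in A, b\in B\}$). Let $x_1,\dots,x_m$ be an enumeration of $C_l\setminus(C_{l-2}+(1,1,1))$ and $S_l=\bigcup_{i=1}^m\big(Q_i'+(3m+6)x_i\big)$. A set $P$ tiles $E$ by $W$ if $W\oplus P$ is non-overlapping (each sum arises from a unique pair) and $W\oplus P=E$. *)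

From Stdlib Require Import ZArith Bool.
Open Scope Z_scope.

Definition pt : Type := (Z * Z * Z)%type.

Definition padd (p q : pt) : pt :=
  let '(a, b, c) := p in let '(d, e, f) := q in (a + d, b + e, c + f).
Definition psub (p q : pt) : pt :=
  let '(a, b, c) := p in let '(d, e, f) := q in (a - d, b - e, c - f).
Definition pscale (k : Z) (p : pt) : pt :=
  let '(a, b, c) := p in (k * a, k * b, k * c).

Definition Ccube (r : Z) (p : pt) : Prop :=
  let '(a, b, c) := p in 0 <= a < r /\ 0 <= b < r /\ 0 <= c < r.

Definition mval (l : Z) : Z := l ^ 3 - (l - 2) ^ 3.

Definition box (m : Z) (p : pt) : Prop :=
  let '(a, b, c) := p in 0 <= a <= m + 1 /\ 0 <= b <= m + 1 /\ 0 <= c <= m + 1.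

(* the function f on the box (the defining cases are pairwise disjoint) *)
Definition fval (m : Z) (p : pt) : Z :=
  let '(x, y, z) := p in
  if (0 <=? x) && (x <=? m) && (1 <=? y) && (y <=? m) && (z =? 0) then y
  else if (1 <=? x) && (x <=? m) && (0 <=? y) && (y <=? m) && (z =? m + 1) then x
  else if (x =? 0) && (1 <=? y) && (y <=? m) && (1 <=? z) && (z <=? m) then y
  else if (1 <=? x) && (x <=? m) && (y =? 0) && (1 <=? z) && (z <=? m) then x
  else if (1 <=? x) && (x <=? m + 1) && (1 <=? y) && (y <=? m + 1)
          && (1 <=? z) && (z <=? m) then z
  else 1.

Definition Q (m i : Z) (p : pt) : Prop := box m p /\ fval m p = i.

Definition Q3 (m i : Z) (p : pt) : Prop :=
  exists q c, Q m i q /\ Ccube 3 c /\ p = padd (pscale 3 q) c.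

Definition Qp (m i : Z) (p : pt) : Prop :=
  if i =? 1 then
    (Q3 m 1 p \/ p = (-1, 1, 1) \/ p = (1, -1, 1) \/ p = (1, 1, -1)) /\
    p <> (3 * m + 5, 1, 1) /\ p <> (1, 3 * m + 5, 1) /\ p <> (1, 1, 3 * m + 5)
  else Q3 m i p.

Definition shell (l : Z) (p : pt) : Prop :=
  Ccube l p /\ ~ Ccube (l - 2) (psub p (1, 1, 1)).

Definition is_enum (l : Z) (x : Z -> pt) : Prop :=
  (forall i, 1 <= i <= mval l -> shell l (x i)) /\
  (forall i j, 1 <= i <= mval l -> 1 <= j <= mval l -> x i = x j -> i = j) /\
  (forall p, shell l p -> exists i, 1 <= i <= mval l /\ x i = p).

Definition S_l (l : Z) (x : Z -> pt) (p : pt) : Prop :=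
  exists i, 1 <= i <= mval l /\
    Qp (mval l) i (psub p (pscale (3 * mval l + 6) (x i))).

Definition tiles (P E W : pt -> Prop) : Prop :=
  (forall w1 w2 p1 p2, W w1 -> W w2 -> P p1 -> P p2 ->
     padd w1 p1 = padd w2 p2 -> w1 = w2 /\ p1 = p2) /\
  (forall e, E e <-> exists w p, W w /\ P p /\ e = padd w p).

Definition Zcube : pt -> Prop := fun _ => True.

Definition lattice (k : Z) (p : pt) : Prop := exists v : pt, p = pscale k v.

(* Write N = 3m+6.  The cubes 3Q_i (+) C_3 partition [0,N)^3, and the point (-1,1,1)
   added to Q_1' is congruent mod N to the point (N-1,1,1) removed from it (likewise in
   the other two axes).  So the union of the Q_i' is a set of representatives of Z^3/NZ^3,
   and shifting the pieces by the lattice vectors N x_i keeps it one: S_l tiles by NZ^3.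
   Conversely, let W (+) S_l = Z^3.  For w in W the removed point of w + S_l, a "dent",
   is covered by some v + s; five of its six neighbours lie in w + S_l, so by
   non-overlapping s has no neighbour in S_l except in the direction of the dent's axis.
   The only such point is the added "bump", which forces v = w + N e_k.  Hence W is
   invariant under NZ^3, and since a coset of NZ^3 inside W already tiles, W is that coset. *)

From Stdlib Require Import ZArith Lia Classical.
Open Scope Z_scope.

Lemma pt_ext (a b c d e f : Z) : a = d -> b = e -> c = f -> (a, b, c) = (d, e, f).
Proof. now intros -> -> ->. Qed.

Lemma pt_inj (a b c d e f : Z) : (a, b, c) = (d, e, f) -> a = d /\ b = e /\ c = f.
Proof. now intros [= -> -> ->]. Qed.

Inductive axis : Set := AxisX | AxisY | AxisZ.

Definition basis (k : axis) : pt :=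
  match k with AxisX => (1, 0, 0) | AxisY => (0, 1, 0) | AxisZ => (0, 0, 1) end.

Definition next_axis (k : axis) : axis :=
  match k with AxisX => AxisY | AxisY => AxisZ | AxisZ => AxisX end.

Definition unit_step (f : pt) : Prop :=
  exists a s, (s = 1 \/ s = -1) /\ f = pscale s (basis a).

(* [bump k] is the point added to Q_1' and [dent m k] the point removed from it, e.g.
   (-1,1,1) and (3m+5,1,1) for [k = AxisX]. *)
Definition bump (k : axis) : pt := psub (1, 1, 1) (pscale 2 (basis k)).
Definition dent (m : Z) (k : axis) : pt := padd (1, 1, 1) (pscale (3 * m + 4) (basis k)).

Ltac pt_lia :=
  repeat match goal with
         | p : pt |- _ => destruct p as [[? ?] ?]
         | p : (Z * Z * Z)%type |- _ => destruct p as [[? ?] ?]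
         end;
  cbv beta iota delta [padd psub pscale basis next_axis bump dent Ccube box] in *;
  repeat match goal with H : (_, _, _) = (_, _, _) |- _ => apply pt_inj in H as (? & ? & ?) end;
  try apply pt_ext; lia.

Ltac fval_cases :=
  unfold fval;
  repeat (first [ match goal with |- context [Z.leb ?a ?b] => destruct (Z.leb_spec a b) end
                | match goal with |- context [Z.eqb ?a ?b] => destruct (Z.eqb_spec a b) end ];
          cbn; try lia).

Lemma mod_eq_of_sub_eq n a b v : n <> 0 -> a - b = n * v -> a mod n = b mod n.
Proof. intros Hn E. replace a with (b + v * n) by lia. now apply Z.mod_add. Qed.

Definition pdiv (n : Z) (p : pt) : pt := let '(a, b, c) := p in (a / n, b / n, c / n).
Definition pmod (n : Z) (p : pt) : pt := let '(a, b, c) := p in (a mod n, b mod n, c mod n).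

Lemma pdiv_pmod n p : n <> 0 -> p = padd (pscale n (pdiv n p)) (pmod n p).
Proof. intros Hn; destruct p as [[a b] c]; apply pt_ext; now apply Z.div_mod. Qed.

Lemma pmod_range n p : 0 < n -> Ccube n (pmod n p).
Proof. destruct p as [[a b] c]; intros Hn; cbn; now repeat split; apply Z.mod_pos_bound. Qed.

Lemma pmod_small n p : Ccube n p -> pmod n p = p.
Proof. destruct p as [[a b] c]; intros (Ha & Hb & Hc); apply pt_ext; now apply Z.mod_small. Qed.

Lemma pmod_lattice n p q : n <> 0 -> lattice n (psub p q) -> pmod n p = pmod n q.
Proof.
  intros Hn [[[v1 v2] v3] E]; destruct p as [[a b] c], q as [[a' b'] c'].
  injection E as E1 E2 E3.
  apply pt_ext; eapply mod_eq_of_sub_eq; eassumption.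
Qed.

Lemma lattice_sub_pmod n p : n <> 0 -> lattice n (psub p (pmod n p)).
Proof.
  intros Hn; exists (pdiv n p).
  rewrite (pdiv_pmod n p Hn) at 1; generalize (pdiv n p) (pmod n p); intros; pt_lia.
Qed.

Lemma closed_add_scale (W : pt -> Prop) d :
  (forall w, W w -> W (padd w d)) -> (forall w, W w -> W (psub w d)) ->
  forall n w, W w -> W (padd w (pscale n d)).
Proof.
  intros Hadd Hsub n; induction n using Z.peano_ind; intros w Hw.
  - replace (padd w (pscale 0 d)) with w by pt_lia; exact Hw.
  - replace (padd w (pscale (Z.succ n) d)) with (padd (padd w (pscale n d)) d) by pt_lia; auto.
  - replace (padd w (pscale (Z.pred n) d)) with (psub (padd w (pscale n d)) d) by pt_lia; auto.
Qed.

Lemma closed_add_lattice (W : pt -> Prop) n :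
  (forall k w, W w -> W (padd w (pscale n (basis k)))) ->
  (forall k w, W w -> W (psub w (pscale n (basis k)))) ->
  forall w v, W w -> W (padd w (pscale n v)).
Proof.
  intros Hadd Hsub w [[a b] c] Hw.
  replace (padd w (pscale n (a, b, c))) with
    (padd (padd (padd w (pscale a (pscale n (basis AxisX))))
                (pscale b (pscale n (basis AxisY))))
          (pscale c (pscale n (basis AxisZ)))) by pt_lia.
  repeat (apply closed_add_scale; [apply Hadd | apply Hsub |]); exact Hw.
Qed.

Section Tilings.

Variables P W : pt -> Prop.
Hypothesis tiling : tiles P Zcube W.

Lemma tiles_cover e : exists w p, W w /\ P p /\ e = padd w p.
Proof. exact (proj1 (proj2 tiling e) I). Qed.

Lemma tiles_inj w1 w2 p1 p2 :
  W w1 -> W w2 -> P p1 -> P p2 -> padd w1 p1 = padd w2 p2 -> w1 = w2.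
Proof. intros; now apply (proj1 tiling w1 w2 p1 p2). Qed.

Lemma tiles_closed_sub d :
  (forall w, W w -> W (padd w d)) -> forall w, W w -> W (psub w d).
Proof.
  intros Hd w Hw.
  destruct (tiles_cover (0, 0, 0)) as (_ & s0 & _ & Hs0 & _).
  destruct (tiles_cover (padd (psub w d) s0)) as (v & s & Hv & Hs & E).
  assert (Ev : padd v d = w).
  { apply (tiles_inj _ _ s s0 (Hd v Hv) Hw Hs Hs0); pt_lia. }
  replace (psub w d) with v by pt_lia; exact Hv.
Qed.

Lemma tiles_covering_subset (W' : pt -> Prop) :
  (forall e, exists w p, W' w /\ P p /\ e = padd w p) ->
  (forall w, W' w -> W w) -> forall w, W w -> W' w.
Proof.
  intros cover' sub u Hu.
  destruct (tiles_cover (0, 0, 0)) as (_ & s0 & _ & Hs0 & _).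
  destruct (cover' (padd u s0)) as (w & p & Hw & Hp & E).
  now rewrite (tiles_inj u w s0 p Hu (sub w Hw) Hs0 Hp E).
Qed.

End Tilings.

Section Shape.

Variable m : Z.
Hypothesis m_pos : 1 <= m.
Local Notation N := (3 * m + 6).

Lemma fval_range q : box m q -> 1 <= fval m q <= m.
Proof. destruct q as [[a b] c]; cbn; intros; fval_cases. Qed.

Lemma fval_origin : fval m (0, 0, 0) = 1.
Proof. fval_cases. Qed.

Lemma fval_corner k : fval m (pscale (m + 1) (basis k)) = 1.
Proof. destruct k; cbn; fval_cases. Qed.

Lemma Q3_range i q : Q3 m i q -> Ccube N q /\ 1 <= i <= m.
Proof.
  intros (c & r & [Hc <-] & Hr & ->); split; [pt_lia | now apply fval_range].
Qed.

Lemma Q3_fun i j q : Q3 m i q -> Q3 m j q -> i = j.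
Proof.
  intros (c & r & [_ <-] & Hr & ->) (c' & r' & [_ <-] & Hr' & E).
  now replace c' with c by pt_lia.
Qed.

Lemma Q3_of_cube q : Ccube N q -> Q3 m (fval m (pdiv 3 q)) q.
Proof.
  intros Hq; exists (pdiv 3 q), (pmod 3 q).
  pose proof (pdiv_pmod 3 q ltac:(lia)) as Eq.
  pose proof (pmod_range 3 q ltac:(lia)) as Hr.
  split; [split; [|reflexivity] | split; [exact Hr | exact Eq]].
  revert Hq Eq Hr; generalize (pdiv 3 q) (pmod 3 q); intros; pt_lia.
Qed.

Lemma Q3_origin q : Ccube 3 q -> Q3 m 1 q.
Proof.
  intros Hq; exists (0, 0, 0), q.
  split; [split; [pt_lia | exact fval_origin] | split; [exact Hq | pt_lia]].
Qed.

Lemma Q3_corner k q : Ccube 3 (psub q (pscale (3 * m + 3) (basis k))) -> Q3 m 1 q.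
Proof.
  intros Hq; exists (pscale (m + 1) (basis k)), (psub q (pscale (3 * m + 3) (basis k))).
  split; [split; [destruct k; pt_lia | apply fval_corner] | split; [exact Hq | destruct k; pt_lia]].
Qed.

Lemma Ccube3_step r a :
  Ccube 3 r -> exists s, (s = 1 \/ s = -1) /\ Ccube 3 (padd r (pscale s (basis a))).
Proof.
  destruct r as [[r1 r2] r3]; cbn; intros Hr.
  destruct a; [destruct (Z.eq_dec r1 0) | destruct (Z.eq_dec r2 0) | destruct (Z.eq_dec r3 0)];
    first [exists 1; pt_lia | exists (-1); pt_lia].
Qed.

Lemma Q3_step i q a :
  Q3 m i q -> exists s, (s = 1 \/ s = -1) /\ Q3 m i (padd q (pscale s (basis a))).
Proof.
  intros (c & r & Hc & Hr & ->).
  destruct (Ccube3_step r a Hr) as (s & Hs & Hr').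
  exists s; split; [exact Hs|].
  exists c, (padd r (pscale s (basis a))).
  split; [exact Hc | split; [exact Hr' | destruct a; pt_lia]].
Qed.

Lemma Q3_dent k : Q3 m 1 (dent m k).
Proof. apply (Q3_corner k); destruct k; pt_lia. Qed.

Lemma Qp_iff i q :
  Qp m i q <-> (Q3 m i q /\ forall k, q <> dent m k) \/ (i = 1 /\ exists k, q = bump k).
Proof.
  unfold Qp; destruct (Z.eqb_spec i 1) as [-> | Hi]; split.
  - intros [[HQ | [-> | [-> | ->]]] (N1 & N2 & N3)].
    + left; split; [exact HQ|]; intros [] ->; [apply N1 | apply N2 | apply N3]; pt_lia.
    + right; split; [reflexivity | exists AxisX; pt_lia].
    + right; split; [reflexivity | exists AxisY; pt_lia].
    + right; split; [reflexivity | exists AxisZ; pt_lia].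
  - intros [[HQ Hq] | [_ [k ->]]].
    + split; [now left|].
      repeat split; intros ->; [apply (Hq AxisX) | apply (Hq AxisY) | apply (Hq AxisZ)]; pt_lia.
    + split; [destruct k; right; [left | right; left | right; right]; pt_lia|].
      repeat split; intros E; destruct k; pt_lia.
  - intros HQ; left; split; [exact HQ|].
    intros k ->; exact (Hi (Q3_fun _ _ _ HQ (Q3_dent k))).
  - now intros [[HQ _] | [E _]].
Qed.

Lemma Qp_bump k : Qp m 1 (bump k).
Proof. apply Qp_iff; right; split; [reflexivity | now exists k]. Qed.

Lemma Qp_index i q : Qp m i q -> 1 <= i <= m.
Proof.
  intros [[HQ _] | [-> _]]%Qp_iff; [exact (proj2 (Q3_range _ _ HQ)) | lia].
Qed.

Lemma Qp_fun i j q : Qp m i q -> Qp m j q -> i = j.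
Proof.
  intros [[HQ _] | [-> [k ->]]]%Qp_iff [[HQ' _] | [-> [k' E]]]%Qp_iff.
  - exact (Q3_fun _ _ _ HQ HQ').
  - apply Q3_range in HQ as [Hq _]; subst q; destruct k'; pt_lia.
  - apply Q3_range in HQ' as [Hq _]; destruct k; pt_lia.
  - reflexivity.
Qed.

Lemma pmod_bump k : pmod N (bump k) = dent m k.
Proof.
  rewrite (pmod_lattice N (bump k) (dent m k)); [| lia |].
  - apply pmod_small; destruct k; pt_lia.
  - exists (pscale (-1) (basis k)); destruct k; pt_lia.
Qed.

Lemma Qp_pmod i q :
  Qp m i q -> (pmod N q = q /\ forall k, q <> dent m k) \/ exists k, q = bump k.
Proof.
  intros [[HQ Hq] | [_ Hq]]%Qp_iff; [left | now right].
  split; [apply pmod_small, (Q3_range _ _ HQ) | exact Hq].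
Qed.

Lemma Qp_pmod_inj i j q q' : Qp m i q -> Qp m j q' -> pmod N q = pmod N q' -> q = q'.
Proof.
  intros [[Eq Hq] | [k ->]]%Qp_pmod [[Eq' Hq'] | [k' ->]]%Qp_pmod E;
    rewrite ?Eq, ?Eq', ?pmod_bump in E.
  - exact E.
  - now destruct (Hq k').
  - now destruct (Hq' k).
  - destruct k, k'; pt_lia.
Qed.

Lemma Qp_representative e : exists i q, Qp m i q /\ lattice N (psub e q).
Proof.
  set (r := pmod N e).
  assert (Hr : Ccube N r) by (apply pmod_range; lia).
  destruct (classic (exists k, r = dent m k)) as [[k Ek] | Hr'].
  - exists 1, (bump k); split; [exact (Qp_bump k)|].
    destruct (lattice_sub_pmod N e ltac:(lia)) as [v Ev]; fold r in Ev; rewrite Ek in Ev.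
    exists (padd v (basis k)); destruct k; pt_lia.
  - exists (fval m (pdiv 3 r)), r; split; [|apply lattice_sub_pmod; lia].
    apply Qp_iff; left; split; [now apply Q3_of_cube|].
    intros k Ek; apply Hr'; now exists k.
Qed.

Lemma Qp_bump_neighbour k : Qp m 1 (padd (bump k) (basis k)).
Proof.
  apply Qp_iff; left; split.
  - apply Q3_origin; destruct k; pt_lia.
  - intros j E; destruct k, j; pt_lia.
Qed.

Lemma Qp_dent_neighbour k f : unit_step f -> f <> basis k -> Qp m 1 (padd (dent m k) f).
Proof.
  intros (a & s & Hs & ->) Hf; apply Qp_iff; left.
  destruct k, a; destruct Hs as [-> | ->]; try (contradict Hf; reflexivity); split;
    solve [apply (Q3_corner AxisX); pt_lia | apply (Q3_corner AxisY); pt_lia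
          | apply (Q3_corner AxisZ); pt_lia | intros j E; destruct j; pt_lia].
Qed.

Lemma dent_neighbours_same_axis q a b s t j j' :
  (s = 1 \/ s = -1) -> (t = 1 \/ t = -1) ->
  padd q (pscale s (basis a)) = dent m j -> padd q (pscale t (basis b)) = dent m j' -> a = b.
Proof.
  intros Hs Ht Ea Eb.
  destruct a, b; try reflexivity; exfalso; destruct j, j'; pt_lia.
Qed.

Lemma Qp_side_neighbour i q k :
  Qp m i q -> q <> bump k -> exists f, unit_step f /\ f <> basis k /\ Qp m i (padd q f).
Proof.
  intros [[HQ Hq] | [-> [j ->]]]%Qp_iff Hk.
  - destruct (Q3_step i q (next_axis k) HQ) as (s & Hs & Ha),
      (Q3_step i q (next_axis (next_axis k)) HQ) as (t & Ht & Hb).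
    (* Two neighbours of [q] along different axes cannot both be dents. *)
    destruct (classic (exists j, padd q (pscale s (basis (next_axis k))) = dent m j))
      as [[j Ej] | Hfree].
    + exists (pscale t (basis (next_axis (next_axis k)))); split; [now eexists _, t|]; split.
      * intros E; destruct k, Ht as [-> | ->]; pt_lia.
      * apply Qp_iff; left; split; [exact Hb|]; intros j' Ej'.
        pose proof (dent_neighbours_same_axis _ _ _ _ _ _ _ Hs Ht Ej Ej') as Eab.
        destruct k; discriminate Eab.
    + exists (pscale s (basis (next_axis k))); split; [now eexists _, s|]; split.
      * intros E; destruct k, Hs as [-> | ->]; pt_lia.
      * apply Qp_iff; left; split; [exact Ha|]; intros j Ej; apply Hfree; now exists j.
  - exists (basis j); split; [exists j, 1; split; [now left | destruct j; reflexivity]|].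
    split; [|apply Qp_bump_neighbour].
    intros E; apply Hk; destruct j, k; now try discriminate E.
Qed.

End Shape.

Section Tile.

Variable m : Z.
Hypothesis m_pos : 1 <= m.
Variable x : Z -> pt.
Local Notation N := (3 * m + 6).

(* [S_l l x] is [tile (mval l) x]. *)
Definition tile (p : pt) : Prop :=
  exists i, 1 <= i <= m /\ Qp m i (psub p (pscale N (x i))).

Lemma tile_iff p : tile p <-> exists i q, Qp m i q /\ p = padd q (pscale N (x i)).
Proof.
  split.
  - intros (i & _ & Hq); exists i, (psub p (pscale N (x i))); split; [exact Hq|].
    generalize (x i); intros; pt_lia.
  - intros (i & q & Hq & ->); exists i; split; [exact (Qp_index m m_pos i q Hq)|].
    now replace (psub (padd q (pscale N (x i))) (pscale N (x i))) with q
      by (generalize (x i); intros; pt_lia).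
Qed.

Lemma tile_intro i q : Qp m i q -> tile (padd q (pscale N (x i))).
Proof. intros Hq; apply tile_iff; now exists i, q. Qed.

Lemma tile_lattice_inj a b p p' :
  lattice N a -> lattice N b -> tile p -> tile p' -> padd a p = padd b p' -> a = b /\ p = p'.
Proof.
  intros [u ->] [v ->] (i & q & Hq & ->)%tile_iff (j & q' & Hq' & ->)%tile_iff E.
  assert (Eq : q = q').
  { apply (Qp_pmod_inj m m_pos i j q q' Hq Hq'), pmod_lattice; [lia|].
    exists (psub (padd v (x j)) (padd u (x i))); revert E; generalize (x i) (x j); intros; pt_lia. }
  subst q'; rewrite (Qp_fun m m_pos i j q Hq Hq') in E |- *.
  assert (Euv : pscale N u = pscale N v) by (revert E; generalize (x j); intros; pt_lia).
  now rewrite Euv.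
Qed.

Lemma tile_lattice_cover e : exists a p, lattice N a /\ tile p /\ e = padd a p.
Proof.
  destruct (Qp_representative m m_pos e) as (i & q & Hq & [v Ev]).
  exists (psub (pscale N v) (pscale N (x i))), (padd q (pscale N (x i))).
  split; [exists (psub v (x i)) | split; [now apply tile_intro|]]; generalize (x i); intros; pt_lia.
Qed.

Lemma tiles_tile_lattice : tiles tile Zcube (lattice N).
Proof.
  split.
  - intros; now apply tile_lattice_inj.
  - intros e; split; [intros _; apply tile_lattice_cover | now intros].
Qed.

Lemma dent_not_tile k : ~ tile (padd (dent m k) (pscale N (x 1))).
Proof.
  intros Hd.
  pose proof (tile_intro 1 (bump k) (Qp_bump m m_pos k)) as Hb.
  assert (Hlat : lattice N (pscale N (basis k))) by now exists (basis k).
  assert (H0 : lattice N (0, 0, 0)) by (exists (0, 0, 0); pt_lia).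
  destruct (tile_lattice_inj _ _ _ _ H0 Hlat Hd Hb) as [E _].
  - generalize (x 1); intros; destruct k; pt_lia.
  - destruct k; pt_lia.
Qed.

Lemma tile_isolated s k :
  tile s -> (forall f, unit_step f -> f <> basis k -> ~ tile (padd s f)) ->
  s = padd (bump k) (pscale N (x 1)).
Proof.
  intros (i & q & Hq & ->)%tile_iff Hiso.
  destruct (classic (q = bump k)) as [-> | Hk].
  - destruct (proj1 (Qp_iff m m_pos i (bump k)) Hq) as [[HQ _] | [-> _]]; [|reflexivity].
    apply (Q3_range m m_pos) in HQ as [HQ _]; destruct k; pt_lia.
  - destruct (Qp_side_neighbour m m_pos i q k Hq Hk) as (f & Hf & Hfk & Hqf).
    exfalso; apply (Hiso f Hf Hfk).
    replace (padd (padd q (pscale N (x i))) f) with (padd (padd q f) (pscale N (x i)))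
      by (generalize (x i); intros; pt_lia).
    now apply tile_intro.
Qed.

Lemma tiling_step W k :
  tiles tile Zcube W -> forall w, W w -> W (padd w (pscale N (basis k))).
Proof.
  intros HW w Hw.
  set (t := padd (dent m k) (pscale N (x 1))).
  destruct (tiles_cover _ _ HW (padd w t)) as (v & s & Hv & Hs & E).
  assert (Es : s = padd (bump k) (pscale N (x 1))).
  { apply (tile_isolated s k Hs); intros f Hf Hfk Hsf.
    assert (Htf : tile (padd t f)).
    { replace (padd t f) with (padd (padd (dent m k) f) (pscale N (x 1)))
        by (subst t; generalize (dent m k) (x 1); intros; pt_lia).
      now apply tile_intro, Qp_dent_neighbour. }
    assert (Evw : v = w).
    { apply (tiles_inj _ _ HW v w (padd s f) (padd t f) Hv Hw Hsf Htf).
      clearbody t; pt_lia. }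
    subst v; apply (dent_not_tile k); fold t.
    replace t with s by (clearbody t; pt_lia); exact Hs. }
  replace (padd w (pscale N (basis k))) with v
    by (revert E; rewrite Es; subst t; generalize (x 1); destruct k; intros; pt_lia).
  exact Hv.
Qed.

Lemma tile_tilings W :
  tiles tile Zcube W ->
  exists t, forall w, W w <-> exists v, lattice N v /\ w = padd t v.
Proof.
  intros HW.
  destruct (tiles_cover _ _ HW (0, 0, 0)) as (t & _ & Ht & _).
  assert (Hcoset : forall v, lattice N v -> W (padd t v)).
  { intros v [u ->]; apply (closed_add_lattice W N); [| | exact Ht].
    - intros k; apply tiling_step, HW.
    - intros k; apply (tiles_closed_sub _ _ HW), tiling_step, HW. }
  exists t; intros w; split.
  - apply (tiles_covering_subset _ _ HW (fun u => exists v, lattice N v /\ u = padd t v));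
      [| now intros u (v & Hv & ->); apply Hcoset].
    intros e; destruct (tile_lattice_cover (psub e t)) as (v & p & Hv & Hp & E).
    exists (padd t v), p; split; [now exists v | split; [exact Hp | pt_lia]].
  - intros (v & Hv & ->); now apply Hcoset.
Qed.

End Tile.

Theorem lemma2p4 (l : Z) (x : Z -> pt) :
  2 <= l -> is_enum l x ->
  tiles (S_l l x) Zcube (lattice (3 * mval l + 6)) /\
  (forall W : pt -> Prop, tiles (S_l l x) Zcube W ->
     exists t : pt, forall w, W w <-> exists v, lattice (3 * mval l + 6) v /\ w = padd t v).
Proof.
  (* The pieces are only moved by lattice vectors, so [x] need not be an enumeration. *)
  intros Hl _.
  assert (Hm : 1 <= mval l).
  { replace (mval l) with (6 * (l - 1) ^ 2 + 2) by (unfold mval; ring); nia. }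
  exact (conj (tiles_tile_lattice (mval l) Hm x) (tile_tilings (mval l) Hm x)).
Qed.
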